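(* Every positive divisor of an odd Gaussian Carmichael number is $G$-cyclic.
   Context: For a positive integer $n$, $\mathcal{G}_n=\{a+bi\in\mathbb{Z}[i]/n\mathbb{Z}[i] : a^2+b^2\equiv 1\pmod n\}$ and $\Phi(n)=|\mathcal{G}_n|$. An integer $n\ge1$ is $G$-cyclic if $\gcd(\Phi(n),n)=1$. The function $\mathcal{F}$ is defined by $\mathcal{F}(n)=n-1$ if $n\equiv 1\pmod 4$, $\mathcal{F}(n)=n+1$ if $n\equiv 3 \pmod 4$, $\mathcal{F}(n)=n$ otherwise. A composite integer $n$ is a Gaussian Fermat pseudoprime to base $z\in\mathbb{Z}[i]$ if $\gcd(n,z\overline{z})=1$ and $(z/\overline{z})^{\mathcal{F}(n)}\equiv 1\pmod n$ in $\mathbb{Z}[i]/n\mathbb{Z}[i]$. A composite $n$ is a Gaussian Carmichael number if it is a Gaussian Fermat pseudoprime to base $z$ for every $z\in\mathbb{Z}[i]$ with $\gcd(n,z\overline{z})=1$. *)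

(* Gaussian integers are modelled as pairs (a, b) : int * int
   standing for a + b i; congruence mod n in Z[i] is componentwise congruence. *)
From mathcomp Require Import all_boot all_order all_algebra.
Set Implicit Arguments. Unset Strict Implicit. Unset Printing Implicit Defensive.
Import Order.TTheory GRing.Theory Num.Theory.
Local Open Scope ring_scope.

Definition gauss := (int * int)%type.
Definition gone : gauss := (1, 0).
Definition gmul (z w : gauss) : gauss :=
  (z.1 * w.1 - z.2 * w.2, z.1 * w.2 + z.2 * w.1).
Definition gconj (z : gauss) : gauss := (z.1, - z.2).
Definition gnorm (z : gauss) : int := z.1 ^+ 2 + z.2 ^+ 2.
Definition gexp (z : gauss) (k : nat) : gauss := iter k (gmul z) gone.
Definition geqmod (n : nat) (z w : gauss) : bool :=
  ((z.1 == w.1 %[mod n])%Z && (z.2 == w.2 %[mod n])%Z).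

Definition Phi (n : nat) : nat :=
  #|[set p : 'I_n * 'I_n | ((p.1 ^ 2 + p.2 ^ 2) %% n == 1 %% n)%N]|.

Definition G_cyclic (n : nat) : bool := coprime (Phi n) n.

Definition Fm (n : nat) : nat :=
  if (n %% 4 == 1)%N then n.-1 else if (n %% 4 == 3)%N then n.+1 else n.

Definition composite (n : nat) : bool := (1 < n)%N && ~~ prime n.

(* n is a Gaussian Fermat pseudoprime to base z: n composite, gcd(n, z zbar)=1,
   and (z / zbar)^F(n) = 1 in Z[i]/nZ[i]; here z / zbar = z * w where w is the
   (unique) inverse of zbar modulo n. *)
Definition gauss_fermat_psp (n : nat) (z : gauss) : Prop :=
  composite n /\ coprimez (n%:Z) (gnorm z) /\
  forall w : gauss, geqmod n (gmul w (gconj z)) gone ->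
    geqmod n (gexp (gmul z w) (Fm n)) gone.

Definition gauss_carmichael (n : nat) : Prop :=
  composite n /\
  forall z : gauss, coprimez (n%:Z) (gnorm z) -> gauss_fermat_psp n z.

(* Phi(d) is the order of the group G_d of norm-one elements of (Z/dZ)[i]
   (card_normOne_Zp).  The Carmichael property forces this group to have
   exponent dividing 2 F(n): any x in G_d lifts to a Gaussian integer z with
   N(z) prime to n, conj z is invertible modulo n, and z / conj z reduces to
   x^2 modulo d, so x^(2 F(n)) = 1 (carmichael_normOne_exp).  Since n is odd,
   2 F(n) = 2 (n -+ 1) is prime to n, hence to d; a finite group whose
   exponent is prime to d has order prime to d (coprime_card_exponent). *)

From Pilot Require Import Defs.
From HB Require Import structures.
From mathcomp Require Import all_boot all_order all_algebra all_fingroup all_solvable.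
From mathcomp Require Import ring.
Set Implicit Arguments. Unset Strict Implicit. Unset Printing Implicit Defensive.
Import Order.TTheory GRing.Theory Num.Theory.
Local Open Scope ring_scope.

Section NormOneGroup.
Variable R : finComNzRingType.

Definition cmul (u v : R * R) : R * R :=
  (u.1 * v.1 - u.2 * v.2, u.1 * v.2 + u.2 * v.1).
Definition cconj (u : R * R) : R * R := (u.1, - u.2).
Definition cnorm (u : R * R) : R := u.1 * u.1 + u.2 * u.2.

Lemma cnorm_mul u v : cnorm (cmul u v) = cnorm u * cnorm v.
Proof. rewrite /cnorm /cmul /=; ring. Qed.

Lemma cnorm_conj u : cnorm (cconj u) = cnorm u.
Proof. by rewrite /cnorm /= mulrNN. Qed.

Lemma cmul_conj u : cnorm u = 1 -> cmul u (cconj u) = (1, 0).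
Proof. by case: u => a b; rewrite /cnorm /cmul /= => nu; congr (_, _); [rewrite -nu|]; ring. Qed.

Lemma conj_inv_unique u v : cnorm u = 1 -> cmul v (cconj u) = (1, 0) -> v = u.
Proof.
case: u v => a b [p q]; rewrite /cnorm /cmul /= => nu [h1 h2].
have e1 : p * (a * a + b * b) = a * (p * a - q * - b) - b * (p * - b + q * a).
  by ring.
have e2 : q * (a * a + b * b) = b * (p * a - q * - b) + a * (p * - b + q * a).
  by ring.
rewrite nu mulr1 h1 h2 in e1; rewrite nu mulr1 h1 h2 in e2.
by rewrite e1 e2; congr (_, _); ring.
Qed.

Record normOne := NormOne { nval :> R * R; _ : cnorm nval == 1 }.
HB.instance Definition _ := [isSub for nval].
HB.instance Definition _ := [Finite of normOne by <:].

Lemma mulN1_subproof (x y : normOne) : cnorm (cmul x y) == 1.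
Proof. by rewrite cnorm_mul (eqP (valP x)) (eqP (valP y)) mulr1. Qed.
Lemma oneN1_subproof : cnorm (1, 0) == 1.
Proof. by rewrite /cnorm /= mulr1 mulr0 addr0. Qed.
Lemma invN1_subproof (x : normOne) : cnorm (cconj x) == 1.
Proof. by rewrite cnorm_conj; exact: (valP x). Qed.

Definition mulN1 (x y : normOne) : normOne := NormOne (mulN1_subproof x y).
Definition oneN1 : normOne := NormOne oneN1_subproof.
Definition invN1 (x : normOne) : normOne := NormOne (invN1_subproof x).

Lemma mulN1A : associative mulN1.
Proof. by move=> x y z; apply: val_inj; rewrite /= /cmul /=; congr (_, _); ring. Qed.
Lemma mul1N1 : left_id oneN1 mulN1.
Proof. by move=> [[a b] ?]; apply: val_inj; rewrite /= /cmul /=; congr (_, _); ring. Qed.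
Lemma mulVN1 : left_inverse oneN1 invN1 mulN1.
Proof.
move=> x; apply: val_inj; rewrite /= -(cmul_conj (eqP (valP (invN1 x)))).
by rewrite /cmul /=; congr (_, _); ring.
Qed.
HB.instance Definition _ := Finite_isGroup.Build normOne mulN1A mul1N1 mulVN1.

Lemma val_expN1 (x : normOne) k : val (x ^+ k)%g = iter k (cmul x) (1, 0).
Proof. by elim: k => [|k IH] //; rewrite expgS /= -IH. Qed.

End NormOneGroup.

(* A finite group of exponent dividing k has order prime to everything that
   k is prime to: its order and its exponent have the same prime divisors. *)
Lemma coprime_card_exponent (gT : finGroupType) k q : (0 < q)%N ->
  (forall x : gT, x ^+ k = 1)%g -> coprime k q -> coprime #|gT| q.
Proof.
move=> q0 xk ckq.
have /coprime_dvdl /(_ ckq) : (exponent [set: gT] %| k)%N.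
  by apply/exponentP => x _; apply: xk.
by rewrite -cardsT !coprime_pi' ?cardG_gt0 ?exponent_gt0 // (pi_of_exponent [set: gT]%G).
Qed.

Lemma coprime_Fm n : odd n -> coprime (Fm n) n.
Proof.
move=> odd_n; rewrite /Fm; case: ifP => [_|not1].
  exact: coprimePn (odd_gt0 odd_n).
case: ifP => [_|not3]; first exact: coprimeSn.
have : odd (n %% 4) by rewrite odd_mod.
move: not1 not3; have := @ltn_pmod n 4 isT.
by case: (n %% 4)%N => [|[|[|[|k]]]].
Qed.

Lemma coprime_of_parts N d n : (0 < N)%N -> (0 < d)%N -> (0 < n)%N ->
  coprime N d -> coprime N (n`_(\pi(d)^'))%N -> coprime N n.
Proof.
move=> N0 d0 n0 cNd cNe; rewrite -(partnC \pi(d) n0) coprimeMr cNe andbT.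
have pi'N_d : \pi(N)^'.-nat d by rewrite -coprime_pi'.
apply: (@sub_pnat_coprime \pi(N) \pi(d)) (pnat_pi N0) (part_pnat _ _).
by move=> p; apply: pnatPpi pi'N_d.
Qed.

Section Reduction.
Variable m : nat.
Local Notation d := m.+2.
Local Notation Zd := 'Z_d.

Lemma card_normOne_Zp : #|[set: normOne Zd]| = Phi d.
Proof.
rewrite /Phi cardsT card_sub cardsE; apply: eq_card => p; rewrite !inE /cnorm.
have -> : (p.1 * p.1 + p.2 * p.2 : Zd) = ((p.1 ^ 2 + p.2 ^ 2)%N)%:R.
  by rewrite natrD !natrX !natr_Zp !expr2.
by rewrite -val_eqE /= val_Zp_nat // modn_small.
Qed.

Definition red (z : gauss) : Zd * Zd := (z.1%:~R, z.2%:~R).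

Lemma red_mul z w : red (gmul z w) = cmul (red z) (red w).
Proof. by rewrite /red /cmul /= !(intrD, intrN, intrM). Qed.

Lemma red_conj z : red (gconj z) = cconj (red z).
Proof. by rewrite /red /cconj /= intrN. Qed.

Lemma red_exp z k : red (gexp z k) = iter k (cmul (red z)) (1, 0).
Proof. by elim: k => [|k IH] //=; rewrite -IH -red_mul. Qed.

Lemma red_int_congr n (a b : int) :
  (d %| n)%N -> (a == b %[mod n])%Z -> (a%:~R : Zd) = b%:~R.
Proof.
move=> dn; rewrite eqz_mod_dvd => nab.
have /dvdzP [q hq] : (d%:Z %| a - b)%Z by apply: dvdz_trans nab; rewrite dvdzE.
have d0 : (d%:R : Zd) = 0 by rewrite Zp_nat; apply: val_inj; exact: modnn.
by apply/eqP; rewrite -subr_eq0 -intrB hq intrM -pmulrn d0 mulr0.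
Qed.

Lemma red_geqmod n z w : (d %| n)%N -> geqmod n z w -> red z = red w.
Proof.
by move=> dn /andP[h1 h2]; rewrite /red (red_int_congr dn h1) (red_int_congr dn h2).
Qed.

(* Every norm-one residue mod d lifts to a Gaussian integer whose norm is
   prime to n: lift it to 1 modulo the part of n prime to d (CRT). *)
Lemma red_lift n (x : Zd * Zd) : (0 < n)%N -> (d %| n)%N -> cnorm x = 1 ->
  exists2 z : gauss, red z = x & coprimez n%:Z (Defs.gnorm z).
Proof.
case: x => [a b] n0 dn /= nx; pose e := (n`_(\pi(d)^'))%N.
have cde : coprime d e := pnat_coprime (pnat_pi (ltn0Sn _)) (part_pnat _ _).
pose A := chinese d e a 1; pose B := chinese d e b 0; pose N := (A * A + B * B)%N.
have natE (k : nat) (y : Zd) : k = y %[mod d] -> (k%:R : Zd) = y.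
  by move=> h; apply: val_inj; rewrite /= val_Zp_nat // h modn_small.
have redA : (A%:R : Zd) = a := natE _ _ (chinese_modl cde a 1).
have redB : (B%:R : Zd) = b := natE _ _ (chinese_modl cde b 0).
have N_mod_d : N = 1 %[mod d].
  have : (N%:R : Zd) = 1 by rewrite natrD !natrM redA redB.
  by move/(congr1 val); rewrite /= val_Zp_nat // => ->; rewrite modn_small.
have N_mod_e : N = 1 %[mod e].
  have [A1 B0] : A = 1 %[mod e] /\ B = 0 %[mod e] by split; apply: chinese_modr.
  by rewrite /N -modnDm -modnMm A1 modnMm -(modnMm B) B0 modnMm modnDm.
have cNd : coprime N d by rewrite -coprime_modl N_mod_d coprime_modl coprime1n.
have cNe : coprime N e by rewrite -coprime_modl N_mod_e coprime_modl coprime1n.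
have N0 : (0 < N)%N by rewrite lt0n; apply: contraTneq cNd => ->; rewrite /coprime gcd0n.
exists (A%:Z, B%:Z).
  by rewrite /red /= -!pmulrn redA redB.
rewrite /Defs.gnorm /= !expr2 -!PoszM -PoszD coprimezE /= coprime_sym.
exact: coprime_of_parts N0 _ n0 cNd cNe.
Qed.

End Reduction.

(* A Gaussian integer whose norm is prime to n has an invertible conjugate
   modulo n: if u * N(z) = 1 mod n then u * z inverts conj z. *)
Lemma gconj_invertible n (z : gauss) : coprimez n%:Z (Defs.gnorm z) ->
  exists w : gauss, geqmod n (gmul w (gconj z)) gone.
Proof.
rewrite coprimez_sym => /eqP cop; have [u [v uv]] := Bezoutz (Defs.gnorm z) n%:Z.
rewrite cop in uv; exists (u * z.1, u * z.2).
apply/andP; split; rewrite /gmul /gconj /gone /=; last by rewrite mulrN mulrAC addrC subrr.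
rewrite eqz_mod_dvd; apply/dvdzP; exists (- v).
by rewrite -uv /Defs.gnorm !expr2; ring.
Qed.

(* Key step: if d | n and n is a Gaussian Carmichael number, every element x
   of the norm-one group mod d satisfies x^(2 F(n)) = 1.  Lift x to z with
   N(z) prime to n; then z / conj z reduces to x * x modulo d. *)
Lemma carmichael_normOne_exp m n (x : normOne 'Z_(m.+2)) :
  (m.+2 %| n)%N -> gauss_carmichael n -> (x ^+ (2 * Fm n) = 1)%g.
Proof.
move=> dn [/andP[n1 _] carm]; have n0 : (0 < n)%N by apply: ltnW.
have [z red_z cz] := red_lift n0 dn (eqP (valP x)).
have [w wz] := gconj_invertible cz.
have [_ [_ fermat]] := carm z cz.
have red_w : red m w = x.
  apply: (conj_inv_unique (eqP (valP x))).
  by rewrite -red_z -red_conj -red_mul (red_geqmod dn wz).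
have red_zw : red m (gmul z w) = val (x ^+ 2)%g by rewrite red_mul red_z red_w.
apply: val_inj; rewrite expgM val_expN1 -red_zw -red_exp.
exact: red_geqmod dn (fermat w wz).
Qed.


Theorem mainTheorem12 (n d : nat) :
  odd n -> gauss_carmichael n -> (0 < d)%N -> (d %| n)%N -> G_cyclic d.
Proof.
move=> odd_n carm; case: d => [|[|m]] // _ dn; first by rewrite /G_cyclic coprimen1.
have c2Fd : coprime (2 * Fm n) m.+2.
  rewrite coprimeMl coprime2n (dvdn_odd dn odd_n) /=.
  exact: coprime_dvdr dn (coprime_Fm odd_n).
rewrite /G_cyclic -card_normOne_Zp cardsT.
apply: coprime_card_exponent c2Fd => // x.
exact: carmichael_normOne_exp dn carm.
Qed.
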